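(* For every $n\ge 0$ and every $2^n$-mode raw LOPP-circuit $C$, $$[\![D(C)]\!]\circ\mathfrak G_n=\mathfrak G_n\circ[\![C]\!].$$
   Context: Raw LOPP-circuits. These are terms generated from $\mathrm{ph}(\varphi)$ ($1$ mode), $\mathrm{bs}(\theta)$ ($2$ modes), $\mathrm{id}$ ($1$ mode), $\mathrm{sw}$ ($2$ modes) and the empty circuit ($0$ modes), combined by $\circ$ (same number of modes) and $\otimes$ (stacking, the first factor on top). Their semantics $[\![C]\!]$ is a matrix on $\mathbb C^m$ ($m$ modes), with $[\![C_2\circ C_1]\!]=[\![C_2]\!][\![C_1]\!]$, $[\![C_1\otimes C_2]\!]=[\![C_1]\!]\oplus[\![C_2]\!]$, and: - $[\![\mathrm{ph}(\varphi)]\!]=(e^{i\varphi})$; - $[\![\mathrm{bs}(\theta)]\!]=\begin{pmatrix}\cos\theta&i\sin\theta\\i\sin\theta&\cos\theta\end{pmatrix}$; - $[\![\mathrm{sw}]\!]=\begin{pmatrix}0&1\\1&0\end{pmatrix}$; - $[\![\mathrm{id}]\!]=(1)$. Gray code. $G_0(0)=\epsilon$, and $G_n(k)=0G_{n-1}(k)$ if $k<2^{n-1}$, while $G_n(k)=1G_{n-1}(2^n-1-k)$ if $k\ge2^{n-1}$. The map $\mathfrak G_n:\mathbb C^{2^n}\to\mathbb C^{\{0,1\}^n}$ is $|k\rangle\mapsto|G_n(k)\rangle$. For $0\le k\le 2^n-2$, define bit strings $x_{k,n},y_{k,n}$ as follows: - if $k=2j$, then $x_{k,n}=G_{n-1}(j)$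 and $y_{k,n}=\epsilon$; - if $k=2j+1$, write $G_n(k)=w\,a\,1\,0^q$ with $q\in\{0,\dots,n-2\}$, $a\in\{0,1\}$, $w\in\{0,1\}^{n-q-2}$, and set $x_{k,n}=w$ and $y_{k,n}=10^q$. Controlled operators. For bit strings $x,y$ with $|x|+|y|=n-1$ and a $2\times2$ matrix $A$, let $\Lambda^x_yA$ be the operator on $\mathbb C^{\{0,1\}^n}$ with $$\Lambda^x_yA\,|u,a,v\rangle=\begin{cases}|u\rangle\otimes A|a\rangle\otimes|v\rangle&\text{if }uv=xy,\\ |u,a,v\rangle&\text{otherwise},\end{cases}$$ where $|u|=|x|$ and $|v|=|y|$. For $z\in\{0,1\}^n$, let $\Lambda^z s(\varphi)$ multiply $|z\rangle$ by $e^{i\varphi}$ and fix every other basis vector. Decoding semantics. For a raw LOPP-circuit $C$ on $\ell$ modes and $k$ with $k+\ell\le2^n$, define an operator $[\![D_{k,n}(C)]\!]$ on $\mathbb C^{\{0,1\}^n}$ inductively: - $[\![D_{k,n}(C_1\otimes C_2)]\!]=[\![D_{k+\ell_1,n}(C_2)]\!]\,[\![D_{k,n}(C_1)]\!]$, where $C_1$ has $\ell_1$ modes; - $[\![D_{k,n}(C_2\circ C_1)]\!]=[\![D_{k,n}(C_2)]\!]\,[\![D_{k,n}(C_1)]\!]$; - $\mathrm{id}$ and the empty circuit give the identity; - $[\![D_{k,n}(\mathrm{ph}(\varphi))]\!]=\Lambda^{G_n(k)}s(\varphi)$; - $[\![D_{k,n}(\mathrm{sw})]\!]=\Lambda^{x_{k,n}}_{y_{k,n}}X$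 with $X=\begin{pmatrix}0&1\\1&0\end{pmatrix}$; - $[\![D_{k,n}(\mathrm{bs}(\theta))]\!]=\Lambda^{x_{k,n}}_{y_{k,n}}R_X(-2\theta)$, where $R_X(\alpha)=\begin{pmatrix}\cos\frac\alpha2&-i\sin\frac\alpha2\\-i\sin\frac\alpha2&\cos\frac\alpha2\end{pmatrix}$. Finally $[\![D(C)]\!]:=[\![D_{0,n}(C)]\!]$. This is the semantics of the decoded quantum circuit $D(C)$. *)

From HB Require Import structures.
From mathcomp Require Import all_boot all_order all_algebra.
From mathcomp Require Import reals trigo.
From mathcomp Require Import complex.
Set Implicit Arguments. Unset Strict Implicit. Unset Printing Implicit Defensive.
Import Order.TTheory GRing.Theory Num.Theory.
Local Open Scope ring_scope.

Section LOPP.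
Variable R : realType.
Local Notation C := R[i].

Definition expi (phi : R) : C := (cos phi +i* sin phi)%C.

Inductive circ : nat -> Type :=
| Ph : R -> circ 1
| Bs : R -> circ 2
| Idc : circ 1
| Sw : circ 2
| Empty : circ 0
| Comp : forall m, circ m -> circ m -> circ m
| Tens : forall m1 m2, circ m1 -> circ m2 -> circ (m1 + m2).
    (* Tens C1 C2 denotes C1 \otimes C2, C1 on top *)

Definition bs_mx (theta : R) : 'M[C]_2 :=
  \matrix_(i < 2, j < 2)
    (if i == j then (cos theta +i* 0)%C else (0 +i* sin theta)%C).

Definition sw_mx : 'M[C]_2 := \matrix_(i < 2, j < 2) (i != j)%:R.

Fixpoint sem m (c : circ m) : 'M[C]_m :=
  match c in circ m return 'M[C]_m with
  | Ph phi => (expi phi)%:M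
  | Bs theta => bs_mx theta
  | Idc => 1%:M
  | Sw => sw_mx
  | Empty => 1%:M
  | @Comp _ c2 c1 => sem c2 *m sem c1
  | @Tens _ _ c1 c2 => block_mx (sem c1) 0 0 (sem c2)
  end.

(* bit strings are seq bool, written left to right; false = 0, true = 1 *)
Fixpoint gray (n k : nat) : seq bool :=
  match n with
  | 0 => [::]
  | n'.+1 => if (k < 2 ^ n')%N then false :: gray n' k
             else true :: gray n' (2 ^ n - 1 - k)
  end.

(* x_{k,n} and y_{k,n}.  For k odd, G_n(k) = w a 1 0^q where q is the number
   of trailing zeros (index of the last 1 counted from the right). *)
Definition trail0 (s : seq bool) : nat := index true (rev s).

Definition xkn (k n : nat) : seq bool :=
  if ~~ odd k then gray n.-1 k./2
  else take (n - trail0 (gray n k) - 2) (gray n k).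

Definition ykn (k n : nat) : seq bool :=
  if ~~ odd k then [::]
  else true :: nseq (trail0 (gray n k)) false.

(* An operator from C^I to C^J is given by its matrix J -> I -> C
   (entry (z, w) = <z| A |w>). *)
Definition op (I J : finType) := J -> I -> C.

Definition opcomp (I J K : finType) (A : op J K) (B : op I J) : op I K :=
  fun z w => \sum_(u : J) A z u * B u w.

Definition opid (I : finType) : op I I := fun z w => (z == w)%:R.

Notation qstate n := (n.-tuple bool).

Definition bit2 (b : bool) : 'I_2 := if b then ord_max else ord0.

(* Lambda^x_y A : |u,a,v> -> |u> (A|a>) |v> if uv = xy, identity otherwise *)
Definition ctrl (n : nat) (x y : seq bool) (A : 'M[C]_2)
  : op (qstate n) (qstate n) :=
  fun z w =>
    let p := size x in
    let u := take p w in let v := drop p.+1 w in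
    if u ++ v == x ++ y then
      (if (take p z == u) && (drop p.+1 z == v)
       then A (bit2 (nth false z p)) (bit2 (nth false w p)) else 0)
    else (z == w)%:R.

Definition cphase (n : nat) (s : seq bool) (phi : R) : op (qstate n) (qstate n) :=
  fun z w => if z == w then (if val w == s then expi phi else 1) else 0.

Definition X_mx : 'M[C]_2 := \matrix_(i < 2, j < 2) (i != j)%:R.

Definition RX (alpha : R) : 'M[C]_2 :=
  \matrix_(i < 2, j < 2)
    (if i == j then (cos (alpha / 2) +i* 0)%C else (0 +i* (- sin (alpha / 2)))%C).

Fixpoint Dsem (n : nat) m (k : nat) (c : circ m) : op (qstate n) (qstate n) :=
  match c with
  | Ph phi => @cphase n (gray n k) phi
  | Bs theta => @ctrl n (xkn k n) (ykn k n) (RX (- (2 * theta)))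
  | Idc => @opid _
  | Sw => @ctrl n (xkn k n) (ykn k n) X_mx
  | Empty => @opid _
  | @Comp _ c2 c1 => @opcomp _ _ _ (@Dsem n _ k c2) (@Dsem n _ k c1)
  | @Tens m1 _ c1 c2 => @opcomp _ _ _ (@Dsem n _ (k + m1) c2) (@Dsem n _ k c1)
  end.

Definition D (n : nat) m (c : circ m) := @Dsem n m 0%N c.

Definition grayop (n : nat) : op 'I_(2 ^ n) (qstate n) :=
  fun z k => (val z == gray n k)%:R.

Definition mxop m (A : 'M[C]_m) : op 'I_m 'I_m := fun i j => A i j.

End LOPP.

Arguments D {R} n {m} c.
Arguments grayop : clear implicits.

From mathcomp Require Import all_boot all_order all_algebra.
From mathcomp Require Import reals trigo complex.
From mathcomp Require Import zify.
From Stdlib Require Import FunctionalExtensionality.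

Set Implicit Arguments. Unset Strict Implicit. Unset Printing Implicit Defensive.
Set Bullet Behavior "Strict Subproofs".

(* The theorem is the case k = 0, m = 2^n of an invariant proved by induction on circuits:
   when k + m <= 2^n, [[D_{k,n}(C)]] sends |G_n(k+j)> to sum_i [[C]]_{ij} |G_n(k+i)> and fixes
   every other basis state.  Sequential composition is the matrix product on that window, and
   stacking works because the Gray code is injective on [0, 2^n), so the windows of the two
   factors are disjoint.  For a two-mode gate at position k, G_n(k) and G_n(k+1) differ exactly
   in the target bit of Lambda^{x_{k,n}}_{y_{k,n}}; since X and R_X(-2 theta) commute with the
   bit flip, it does not matter which of the two codes carries the 0 in that bit. *)

Lemma size_gray n k : size (gray n k) = n.
Proof. by elim: n k => //= n IH k; case: ifP => _ /=; rewrite IH. Qed.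

Lemma grayS n k : gray n.+1 k =
  if k < 2 ^ n then false :: gray n k else true :: gray n (2 ^ n.+1 - 1 - k).
Proof. by []. Qed.

Lemma gray0 n : gray n 0 = nseq n false.
Proof. by elim: n => //= n ->; rewrite expn_gt0. Qed.

Lemma gray_last n : gray n.+1 (2 ^ n.+1 - 1) = true :: nseq n false.
Proof.
rewrite grayS ifF; last by apply/negbTE; rewrite -leqNgt expnS; have := expn_gt0 2 n; lia.
by rewrite subnn gray0.
Qed.

Lemma gray_inj n a b : a < 2 ^ n -> b < 2 ^ n -> gray n a = gray n b -> a = b.
Proof.
elim: n a b => [|n IH] a b; first by rewrite expn0 !ltnS !leqn0 => /eqP -> /eqP ->.
rewrite !grayS expnS => ha hb; case: ifP => ha'; case: ifP => hb' // [] /IH E.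
- exact: E.
- by have := E ltac:(lia) ltac:(lia); lia.
Qed.

Lemma gray_neq n a b : a < 2 ^ n -> b < 2 ^ n -> a != b -> gray n a != gray n b.
Proof. by move=> ha hb; apply: contra => /eqP /gray_inj -> //. Qed.

Lemma odd_eq_of_add_pow2 a b n : a + b = 2 ^ n.+1 -> odd a = odd b.
Proof. by move/(congr1 odd); rewrite oddD oddX /=; case: (odd a); case: (odd b). Qed.

Lemma gray_double n j : j < 2 ^ n ->
  gray n.+1 (2 * j) = rcons (gray n j) (odd j) /\
  gray n.+1 (2 * j).+1 = rcons (gray n j) (~~ odd j).
Proof.
elim: n j => [|n IH] j; first by rewrite expn0 ltnS leqn0 => /eqP ->.
move=> hj; have pos : 0 < 2 ^ n by rewrite expn_gt0.
have hj2 : j < 2 * 2 ^ n by rewrite -expnS.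
rewrite (grayS n.+1 (2 * j)) (grayS n.+1 (2 * j).+1) (grayS n j).
case: (ltnP j (2 ^ n)) => hjn.
  by rewrite !ifT ?expnS; [have [-> ->] := IH _ hjn| lia | lia].
rewrite !ifF; try by apply/negbTE; rewrite -leqNgt expnS; lia.
set j' := 2 ^ n.+1 - 1 - j.
have hj' : j' < 2 ^ n by rewrite /j' expnS; lia.
have odd_j' : odd j' = ~~ odd j by rewrite (@odd_eq_of_add_pow2 j' j.+1 n) // /j' expnS; lia.
have [E1 E2] := IH _ hj'.
have -> : 2 ^ n.+2 - 1 - 2 * j = (2 * j').+1 by rewrite /j' !expnS; lia.
have -> : 2 ^ n.+2 - 1 - (2 * j).+1 = 2 * j' by rewrite /j' !expnS; lia.
by rewrite E1 E2 odd_j' negbK.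
Qed.

Lemma gray_odd_succ n k : odd k -> k.+1 < 2 ^ n -> exists s a q,
  gray n k = s ++ [:: a, true & nseq q false] /\
  gray n k.+1 = s ++ [:: ~~ a, true & nseq q false].
Proof.
elim: n k => [|n IH] k odd_k hk; first by move: hk; rewrite expn0; lia.
have pos : 0 < 2 ^ n by rewrite expn_gt0.
have hk2 : k.+1 < 2 * 2 ^ n by rewrite -expnS.
rewrite (grayS n k) (grayS n k.+1).
case: (ltnP k.+1 (2 ^ n)) => h1.
  rewrite ifT; last by lia.
  have [s [a [q [E1 E2]]]] := IH k odd_k h1.
  by exists (false :: s), a, q; rewrite E1 E2.
case: (ltnP k (2 ^ n)) => h2.
  move: IH pos h1 h2 hk2 hk; case: n => [|n] IH pos h1 h2 hk2 hk.
    by move: h2 odd_k; rewrite expn0 ltnS leqn0 => /eqP ->.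
  have -> : k = 2 ^ n.+1 - 1 by lia.
  have -> : 2 ^ n.+2 - 1 - (2 ^ n.+1 - 1).+1 = 2 ^ n.+1 - 1 by rewrite expnS; lia.
  by rewrite gray_last; exists [::], false, n.
set k' := 2 ^ n.+1 - 2 - k.
have odd_k' : odd k' by rewrite (@odd_eq_of_add_pow2 k' k.+2 n) /= ?odd_k // /k' expnS; lia.
have hk' : k'.+1 < 2 ^ n by rewrite /k' expnS; lia.
have [s [a [q [E1 E2]]]] := IH k' odd_k' hk'.
have -> : 2 ^ n.+1 - 1 - k = k'.+1 by rewrite /k' expnS; lia.
have -> : 2 ^ n.+1 - 1 - k.+1 = k' by rewrite /k' expnS; lia.
by exists (true :: s), (~~ a), q; rewrite E1 E2 negbK.
Qed.

Lemma trail0_cat (s : seq bool) a q : trail0 (s ++ [:: a, true & nseq q false]) = q.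
Proof.
rewrite /trail0 -cat1s catA rev_cat rev_cons rev_nseq -cats1 -catA index_cat.
by rewrite mem_nseq andbF /= size_nseq addn0.
Qed.

Lemma gray_succ_flip n k : k.+2 <= 2 ^ n -> exists b,
  gray n k = xkn k n ++ b :: ykn k n /\ gray n k.+1 = xkn k n ++ ~~ b :: ykn k n.
Proof.
move=> hk; case odd_k: (odd k).
  have [s [a [q [E1 E2]]]] := gray_odd_succ odd_k hk.
  have hs : n - q - 2 = size s.
    by have := size_gray n k; rewrite E1 size_cat /= size_nseq; lia.
  by exists a; rewrite /xkn /ykn odd_k /= E1 trail0_cat hs take_size_cat -?E1.
move: hk; case: n => [|n] hk; first by move: hk; rewrite expn0.
have -> : k = 2 * k./2 by have := odd_double_half k; rewrite odd_k add0n -mul2n.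
have hj : k./2 < 2 ^ n by move: hk; rewrite expnS; lia.
have [E1 E2] := gray_double hj.
by exists (odd k./2); rewrite /xkn /ykn E1 E2 -!cats1 mul2n odd_double doubleK.
Qed.

Import GRing.Theory Num.Theory.
Local Open Scope ring_scope.

Section Decoding.
Variable R : realType.
Local Notation C := R[i].
Local Notation qop n := (op R (n.-tuple bool) (n.-tuple bool)).

Definition gray_tuple n k : n.-tuple bool := Tuple (introT eqP (size_gray n k)).

Lemma sum_gray_delta n (F : n.-tuple bool -> C) k :
  \sum_(u : n.-tuple bool) F u * ((u : seq bool) == gray n k)%:R = F (gray_tuple n k).
Proof.
rewrite (bigD1 (gray_tuple n k)) //= eqxx mulr1 big1 ?addr0 // => u /negbTE hu.
by rewrite -[gray n k]/(val (gray_tuple n k)) val_eqE hu mulr0.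
Qed.

Lemma sum_delta n (F : n.-tuple bool -> C) w :
  \sum_(u : n.-tuple bool) F u * (u == w)%:R = F w.
Proof. by rewrite (bigD1 w) //= eqxx mulr1 big1 ?addr0 // => u /negbTE ->; rewrite mulr0. Qed.

Definition acts_on_window n k m (M : 'M[C]_m) (A : qop n) : Prop :=
  (forall z (j : 'I_m), A z (gray_tuple n (k + j)%N) =
                        \sum_(i < m) ((z : seq bool) == gray n (k + i)%N)%:R * M i j) /\
  (forall z w : n.-tuple bool,
     (forall j : 'I_m, (w : seq bool) != gray n (k + j)%N) -> A z w = (z == w)%:R).
Arguments acts_on_window n k {m} M A.

Lemma opid_window n k m : acts_on_window n k (1%:M : 'M[C]_m) (@opid R _).
Proof.
split=> // z j; rewrite (bigD1 j) //= mxE eqxx mulr1 big1 ?addr0 => [|i /negbTE ij].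
  by rewrite /opid -val_eqE.
by rewrite mxE ij mulr0.
Qed.

Lemma cphase_window n k phi :
  acts_on_window n k ((expi phi)%:M : 'M[C]_1) (cphase (gray n k) phi).
Proof.
split=> [z j|z w /(_ ord0)]; rewrite /cphase ?ord1 ?addn0 ?big_ord1 ?mxE //=.
  by rewrite addn0 eqxx mulr1n -val_eqE; case: eqP; rewrite ?mul0r ?mul1r.
by move/negbTE => ->; case: eqP.
Qed.

Lemma window_comp n k m (M1 M2 : 'M[C]_m) (A1 A2 : qop n) :
  acts_on_window n k M1 A1 -> acts_on_window n k M2 A2 ->
  acts_on_window n k (M2 *m M1) (opcomp A2 A1).
Proof.
move=> [A1_in A1_out] [A2_in A2_out]; split=> [z j|z w w_out]; rewrite /opcomp.
  under eq_bigr => u _ do rewrite A1_in mulr_sumr.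
  rewrite exchange_big /=.
  under eq_bigr => i _ do
    rewrite (eq_bigr _ (fun u _ => mulrA _ _ _)) -mulr_suml sum_gray_delta A2_in mulr_suml.
  rewrite exchange_big /=; apply: eq_bigr => l _.
  by rewrite mxE mulr_sumr; apply: eq_bigr => i _; rewrite mulrA.
under eq_bigr => u _ do rewrite (A1_out u w w_out).
by rewrite sum_delta A2_out.
Qed.

Lemma window_tens n k m1 m2 (M1 : 'M[C]_m1) (M2 : 'M[C]_m2) (A1 A2 : qop n) :
  (k + m1 + m2 <= 2 ^ n)%N ->
  acts_on_window n k M1 A1 -> acts_on_window n (k + m1)%N M2 A2 ->
  acts_on_window n k (block_mx M1 0 0 M2) (opcomp A2 A1).
Proof.
move=> hk [A1_in A1_out] [A2_in A2_out].
have disjoint (i : 'I_m1) (l : 'I_m2) : gray n (k + i)%N != gray n (k + m1 + l)%N.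
  by apply: gray_neq; have := ltn_ord i; have := ltn_ord l; lia.
split=> [z j|z w w_out]; rewrite /opcomp.
  rewrite -(splitK j); case: (split j) => [j1|j2] /=; rewrite big_split_ord /=.
    under eq_bigr => u _ do rewrite A1_in mulr_sumr.
    rewrite exchange_big [X in _ = _ + X]big1 ?addr0 => [|l _]; last first.
      by rewrite block_mxEdl mxE mulr0.
    apply: eq_bigr => i _.
    rewrite (eq_bigr _ (fun u _ => mulrA _ _ _)) -mulr_suml sum_gray_delta.
    by rewrite A2_out ?block_mxEul -?val_eqE // => l; apply: disjoint.
  have A1_fix u : A1 u (gray_tuple n (k + (m1 + j2))) = (u == gray_tuple n (k + (m1 + j2)))%:R.
    by apply: A1_out => i; rewrite /= addnA eq_sym disjoint.
  under eq_bigr => u _ do rewrite A1_fix.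
  rewrite sum_delta addnA A2_in [X in _ = X + _]big1 ?add0r => [|i _]; last first.
    by rewrite block_mxEur mxE mulr0.
  by apply: eq_bigr => l _; rewrite block_mxEdr addnA.
have A1_fix u : A1 u w = (u == w)%:R by apply: A1_out => i; apply: (w_out (lshift m2 i)).
under eq_bigr => u _ do rewrite A1_fix.
rewrite sum_delta A2_out // => l.
by rewrite -addnA; apply: (w_out (rshift m1 l)).
Qed.

Lemma tuple_cat_cons n p (t : n.-tuple bool) : (p < n)%N ->
  exists t1 c t2, t = t1 ++ c :: t2 :> seq bool /\ size t1 = p.
Proof.
move=> lt_pn; exists (take p t), (nth false t p), (drop p.+1 t).
by rewrite -drop_nth ?size_tuple // cat_take_drop (minn_idPl (ltnW lt_pn)).
Qed.

Lemma ctrl_cat n (x y : seq bool) (A : 'M[C]_2) (z w : n.-tuple bool) z1 cz z2 w1 cw w2 :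
  size z1 = size x -> size w1 = size x ->
  z = z1 ++ cz :: z2 :> seq bool -> w = w1 ++ cw :: w2 :> seq bool ->
  ctrl x y A z w =
    if w1 ++ w2 == x ++ y then
      (if (z1 == w1) && (z2 == w2) then A (bit2 cz) (bit2 cw) else 0)
    else (z == w)%:R.
Proof.
have cut (s1 s2 : seq bool) c : [/\ take (size s1) (s1 ++ c :: s2) = s1,
    nth false (s1 ++ c :: s2) (size s1) = c & drop (size s1).+1 (s1 ++ c :: s2) = s2].
  by rewrite take_size_cat // nth_cat ltnn subnn -cat_rcons drop_size_cat ?size_rcons.
move=> sz sw Ez Ew; rewrite /ctrl Ez Ew.
by case: (cut z1 z2 cz) (cut w1 w2 cw); rewrite sz sw => -> -> -> [-> -> ->].
Qed.

Lemma bit2_eq b c : (bit2 b == bit2 c) = (b == c).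
Proof. by case: b; case: c. Qed.

Lemma ctrl_window n k x y b (A : 'M[C]_2) (f : bool -> C) :
  (forall i j, A i j = f (i == j)) ->
  gray n k = x ++ b :: y -> gray n k.+1 = x ++ ~~ b :: y ->
  acts_on_window n k A (ctrl x y A).
Proof.
move=> Af Ek Ek1.
have lt_xn : (size x < n)%N by rewrite -(size_gray n k) Ek size_cat /= addnS ltnS leq_addr.
have gray_j (j : 'I_2) : gray n (k + j) = x ++ (if j == ord0 then b else ~~ b) :: y.
  by case: j => [[|[|//]]] hj; rewrite ?addn0 ?addn1.
split=> [z j|z w w_out].
- have [z1 [cz [z2 [Ez sz]]]] := tuple_cat_cons z lt_xn.
  rewrite (ctrl_cat (w := gray_tuple n (k + j)) _ _ sz (erefl (size x)) Ez (gray_j j)).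
  rewrite eqxx !big_ord_recl big_ord0 addr0 !gray_j Ez !eqseq_cat // !eqseq_cons !Af bit2_eq.
  case: (z1 == x) (z2 == y) => [] [] /=; rewrite ?andbF ?mul0r ?addr0 //.
  case: j => [[|[|//]]] hj; rewrite -!val_eqE /= {Ez}.
  all: by case: cz; case: b {Ek Ek1 gray_j}; rewrite /= ?mul1r ?mul0r ?addr0 ?add0r.
- have [z1 [cz [z2 [Ez sz]]]] := tuple_cat_cons z lt_xn.
  have [w1 [cw [w2 [Ew sw]]]] := tuple_cat_cons w lt_xn.
  rewrite (ctrl_cat _ _ sz sw Ez Ew) eqseq_cat //; case: eqP => //= w1x; case: eqP => //= w2y.
  move: (w_out ord0) (w_out ord_max); rewrite /= addn0 addn1 Ek Ek1 Ew w1x w2y {Ew}.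
  by case: cw; case: b {Ek Ek1 gray_j}; rewrite eqxx.
Qed.

Lemma gate_window n k (A : 'M[C]_2) (f : bool -> C) :
  (k.+2 <= 2 ^ n)%N -> (forall i j, A i j = f (i == j)) ->
  acts_on_window n k A (ctrl (xkn k n) (ykn k n) A).
Proof. by move=> /gray_succ_flip [b [E0 E1]] Af; apply: ctrl_window Af E0 E1. Qed.

Lemma RX_bs (theta : R) : RX (- (2 * theta)) = bs_mx theta.
Proof.
apply/matrixP => i j; rewrite !mxE mulNr mulrC mulKf ?pnatr_eq0 //.
by rewrite cosN sinN opprK.
Qed.

Lemma Dsem_window n m (c : circ R m) k :
  (k + m <= 2 ^ n)%N -> acts_on_window n k (sem c) (Dsem k c).
Proof.
elim: m / c k => [phi|theta||||m c2 IH2 c1 IH1|m1 m2 c1 IH1 c2 IH2] k hk /=.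
- exact: cphase_window.
- rewrite RX_bs; pose f d := if d then (cos theta +i* 0)%C else (0 +i* sin theta)%C.
  by apply: (gate_window (f := f)) => [|i j]; rewrite ?mxE // -addn2.
- exact: opid_window.
- by apply: (gate_window (f := fun d => (~~ d)%:R)) => [|i j]; rewrite ?mxE // -addn2.
- exact: opid_window.
- exact: window_comp (IH1 k hk) (IH2 k hk).
- by apply: window_tens; [lia | apply: IH1; lia | apply: IH2; lia].
Qed.

End Decoding.

Theorem mainTheorem6 (R : realType) (n : nat) (c : circ R (2 ^ n)) :
  opcomp (D n c) (grayop R n) = opcomp (grayop R n) (mxop (sem c)).
Proof.
have [D_in _] := Dsem_window c (k := 0) (leqnn _).
apply: functional_extensionality => z; apply: functional_extensionality => j.
by rewrite /opcomp /grayop /mxop /D sum_gray_delta D_in.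
Qed.
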